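(* In the setting below, let $N=\lim_{t\to\infty}(S+tP)^{-1}$ for a signless Laplacian $P$ with graph $G$, and let $G_1,\dots,G_k$ be the connected components of $G$. For $i,j\in\{1,\dots,k\}$ let $N[i,j]$ be the submatrix of $N$ with rows indexed by the vertices of $G_i$ and columns indexed by the vertices of $G_j$. Then: (1) within each block $N[i,j]$ all entries are equal up to sign; (2) if $G_i$ is not bipartite then $N[i,j]=N[j,i]=0$ for all $j$; in particular $N=0$ if and only if no component of $G$ is bipartite; (3) if $G_i$ is bipartite with classes of sizes $p_i,q_i$ and $G_j$ is bipartite with classes of sizes $p_j,q_j$, then, ordering the vertices of each of $G_i,G_j$ so that the class of size $p$ comes first, $$N[i,j]=c_{ij}\begin{pmatrix}\mathbf{1}_{p_i}\mathbf{1}_{p_j}^\top&-\mathbf{1}_{p_i}\mathbf{1}_{q_j}^\top\\-\mathbf{1}_{q_i}\mathbf{1}_{p_j}^\top&\mathbf{1}_{q_i}\mathbf{1}_{q_j}^\top\end{pmatrix}$$ for some constant $c_{ij}\in\mathbb{R}$.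
   Context: Let $n\ge3$, $\ell>0$, $\alpha\ge(n-2)\ell$, and $S=\alpha I_n+\ell\mathbf{1}_n\mathbf{1}_n^\top$. For a real matrix $P$, $\Delta_i(P)=|P_{ii}|-\sum_{j\ne i}|P_{ij}|$. A signless Laplacian is a real symmetric $n\times n$ matrix $P$ with $P_{ij}\in\{0,1\}$ for $i\ne j$, $P_{ii}\ge 0$, and $\Delta_i(P)\in\{0,2\}$ for all $i$. Its graph $G$ has vertex set $\{1,\dots,n\}$, an edge $\{i,j\}$ ($i\ne j$) whenever $P_{ij}=1$, and a self-loop $\{i,i\}$ whenever $\Delta_i(P)=2$. A graph with a self-loop is not bipartite. The limit $N$ exists. *)

(* real matrices as functions nat -> nat -> R, indices < n. *)
From Stdlib Require Import Reals Lra Arith.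
Open Scope R_scope.

Fixpoint rsum (n : nat) (f : nat -> R) : R :=
  match n with O => 0 | S k => rsum k f + f k end.

Definition mat := nat -> nat -> R.

Definition mmul (n : nat) (A B : mat) : mat :=
  fun i j => rsum n (fun k => A i k * B k j).

Definition madd (A B : mat) : mat := fun i j => A i j + B i j.
Definition mscale (t : R) (A : mat) : mat := fun i j => t * A i j.
Definition idm : mat := fun i j => if Nat.eqb i j then 1 else 0.

Definition Smat (alpha l : R) : mat :=
  fun i j => alpha * idm i j + l.

Definition is_inverse (n : nat) (A X : mat) : Prop :=
  forall i j, (i < n)%nat -> (j < n)%nat ->
    mmul n A X i j = idm i j /\ mmul n X A i j = idm i j.

Definition Delta (n : nat) (P : mat) (i : nat) : R :=
  Rabs (P i i) - rsum n (fun j => if Nat.eqb j i then 0 else Rabs (P i j)).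

Definition signless_laplacian (n : nat) (P : mat) : Prop :=
  forall i j, (i < n)%nat -> (j < n)%nat ->
    P i j = P j i /\
    (i <> j -> P i j = 0 \/ P i j = 1) /\
    0 <= P i i /\
    (Delta n P i = 0 \/ Delta n P i = 2).

(* edge relation of the graph G of P (including self-loops) *)
Definition gedge (n : nat) (P : mat) (u v : nat) : Prop :=
  (u < n)%nat /\ (v < n)%nat /\
  ((u <> v /\ P u v = 1) \/ (u = v /\ Delta n P u = 2)).

Inductive gconn (n : nat) (P : mat) (u : nat) : nat -> Prop :=
  | gconn_refl : (u < n)%nat -> gconn n P u u
  | gconn_step : forall v w, gconn n P u v -> gedge n P v w -> gconn n P u w.

(* col is a proper 2-colouring of the component of a (a self-loop makes this impossible) *)
Definition bipartition (n : nat) (P : mat) (a : nat) (col : nat -> bool) : Prop :=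
  forall u v, gconn n P a u -> gconn n P a v -> gedge n P u v -> col u <> col v.

Definition comp_bipartite (n : nat) (P : mat) (a : nat) : Prop :=
  exists col, bipartition n P a col.

Definition sgn (b : bool) : R := if b then 1 else -1.

Definition mlim_infty (n : nat) (X : R -> mat) (N : mat) : Prop :=
  forall i j, (i < n)%nat -> (j < n)%nat ->
    forall eps, 0 < eps -> exists T, forall t, T <= t -> Rabs (X t i j - N i j) < eps.

From Stdlib Require Import Reals Lra Lia ClassicalEpsilon.
From Coquelicot Require Import Coquelicot.
Open Scope R_scope.

(* Proof idea.  Write A(t) = S + tP, so that X(t) = A(t)^{-1} for t >= 0.

   1. PN = 0 and NP = 0.  From A(t) X(t) = I we get t (P X(t)) = I - S X(t), which
      converges, while P X(t) -> PN; a function f with f -> L such that t f(t) also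
      converges must have L = 0.  NP = 0 follows by transposition.
   2. The kernel of a signless Laplacian P consists exactly of the "alternating"
      vectors x: x_w = -x_u along every edge uw of G (so x vanishes at self-loops).
      One direction uses x^T P x = sum_i (Delta_i x_i^2 + 1/2 sum_k P_ik (x_i + x_k)^2)
      with nonnegative summands, the other is a direct computation.
   3. By 1 and 2 every column and every row of N is alternating.  Propagating along
      paths gives (1), the sign pattern (3), and vanishing on non-bipartite components
      (otherwise the sign of the vector would be a 2-colouring), which is (2).
   4. Conversely, if the component of a is bipartite, its signed indicator s is
      alternating, hence in ker P, so X(t) S s = X(t) A(t) s = s for every t and in the
      limit N S s = s; thus N <> 0. *)

Lemma rsum_ext n f g : (forall k, (k < n)%nat -> f k = g k) -> rsum n f = rsum n g.
Proof.
  induction n as [|n IH]; intros H; simpl; [reflexivity|].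
  rewrite IH by (intros; apply H; lia). rewrite H by lia. reflexivity.
Qed.

Lemma rsum_plus n f g : rsum n (fun k => f k + g k) = rsum n f + rsum n g.
Proof. induction n as [|n IH]; simpl; [ring|]. rewrite IH; ring. Qed.

Lemma rsum_scal n c f : rsum n (fun k => c * f k) = c * rsum n f.
Proof. induction n as [|n IH]; simpl; [ring|]. rewrite IH; ring. Qed.

Lemma rsum_zero n f : (forall k, (k < n)%nat -> f k = 0) -> rsum n f = 0.
Proof. intros H. rewrite (rsum_ext n f (fun k => 0 * 0)) by (intros; rewrite H; auto; ring).
  rewrite rsum_scal. ring. Qed.

Lemma rsum_swap n m F :
  rsum n (fun i => rsum m (fun k => F i k)) = rsum m (fun k => rsum n (fun i => F i k)).
Proof.
  induction n as [|n IH]; simpl.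
  - symmetry; apply rsum_zero; auto.
  - rewrite IH, <- rsum_plus. reflexivity.
Qed.

Lemma rsum_nonneg n f : (forall k, (k < n)%nat -> 0 <= f k) -> 0 <= rsum n f.
Proof.
  induction n as [|n IH]; intros H; simpl; [lra|].
  pose proof (IH (fun k Hk => H k ltac:(lia))). pose proof (H n ltac:(lia)). lra.
Qed.

Lemma rsum_nonneg_eq0 n f : (forall k, (k < n)%nat -> 0 <= f k) -> rsum n f = 0 ->
  forall k, (k < n)%nat -> f k = 0.
Proof.
  induction n as [|n IH]; simpl; intros H Hs k Hk; [lia|].
  pose proof (rsum_nonneg n f (fun k Hk => H k ltac:(lia))). pose proof (H n ltac:(lia)).
  destruct (Nat.eq_dec k n) as [->|Hkn]; [lra|].
  apply IH; [intros; apply H; lia | lra | lia].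
Qed.

Lemma rsum_split_at n f i : (i < n)%nat ->
  rsum n f = f i + rsum n (fun k => if Nat.eqb k i then 0 else f k).
Proof.
  induction n as [|n IH]; intros Hi; [lia|]. simpl.
  destruct (Nat.eq_dec i n) as [->|Hin].
  - rewrite Nat.eqb_refl, (rsum_ext n (fun k => if Nat.eqb k n then 0 else f k) f); [ring|].
    intros k Hk. destruct (Nat.eqb_spec k n); [lia|reflexivity].
  - rewrite IH by lia. destruct (Nat.eqb_spec n i); [lia|ring].
Qed.

Lemma idm_sym i j : idm i j = idm j i.
Proof. unfold idm. rewrite Nat.eqb_sym. reflexivity. Qed.

Lemma rsum_idm n i c : (i < n)%nat -> rsum n (fun k => idm i k * c k) = c i.
Proof.
  intros Hi. rewrite (rsum_split_at n _ i Hi), rsum_zero; unfold idm.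
  - rewrite Nat.eqb_refl. ring.
  - intros k Hk. destruct (Nat.eqb_spec k i); [reflexivity|].
    destruct (Nat.eqb_spec i k); [lia|ring].
Qed.

Definition mvec (n : nat) (A : mat) (x : nat -> R) (i : nat) : R :=
  rsum n (fun k => A i k * x k).

Definition mtr (A : mat) : mat := fun i j => A j i.

Definition in_kernel (n : nat) (A : mat) (x : nat -> R) : Prop :=
  forall i, (i < n)%nat -> mvec n A x i = 0.

Lemma mvec_madd_scale n A B t x i :
  mvec n (madd A (mscale t B)) x i = mvec n A x i + t * mvec n B x i.
Proof.
  unfold mvec, madd, mscale. rewrite <- rsum_scal, <- rsum_plus.
  apply rsum_ext; intros; ring.
Qed.

Lemma mmul_madd_scale n A B t C i j :
  mmul n (madd A (mscale t B)) C i j = mmul n A C i j + t * mmul n B C i j.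
Proof. exact (mvec_madd_scale n A B t (fun k => C k j) i). Qed.

Lemma mvec_assoc n A B x i : mvec n A (mvec n B x) i = mvec n (mmul n A B) x i.
Proof.
  unfold mvec, mmul.
  rewrite (rsum_ext n _ (fun j => rsum n (fun k => A i j * B j k * x k)))
    by (intros; rewrite <- rsum_scal; apply rsum_ext; intros; ring).
  rewrite rsum_swap. apply rsum_ext; intros k _.
  rewrite <- (Rmult_comm (x k)), <- rsum_scal. apply rsum_ext; intros; ring.
Qed.

Lemma mmul_mtr n A B i j : mmul n (mtr A) (mtr B) i j = mmul n B A j i.
Proof. unfold mmul, mtr. apply rsum_ext; intros; ring. Qed.

Lemma is_lim_entry n X N i j : mlim_infty n X N -> (i < n)%nat -> (j < n)%nat ->
  is_lim (fun t => X t i j) p_infty (N i j).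
Proof.
  intros HL Hi Hj. apply is_lim_spec. intros eps.
  destruct (HL i j Hi Hj eps (cond_pos eps)) as [T HT].
  exists T. intros t Ht. apply HT. lra.
Qed.

Lemma is_lim_rsum n (F : R -> nat -> R) (L : nat -> R) x :
  (forall k, (k < n)%nat -> is_lim (fun t => F t k) x (L k)) ->
  is_lim (fun t => rsum n (F t)) x (rsum n L).
Proof.
  induction n as [|n IH]; intros H; simpl.
  - apply is_lim_const.
  - apply is_lim_plus'; [apply IH; intros; apply H | apply H]; lia.
Qed.

Lemma is_lim_mmul_l n A X N i j : mlim_infty n X N -> (i < n)%nat -> (j < n)%nat ->
  is_lim (fun t => mmul n A (X t) i j) p_infty (mmul n A N i j).
Proof.
  intros HL Hi Hj. apply is_lim_rsum. intros k Hk.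
  exact (is_lim_scal_l _ (A i k) _ _ (is_lim_entry n X N k j HL Hk Hj)).
Qed.

Lemma is_lim_mvec n X N x i : mlim_infty n X N -> (i < n)%nat ->
  is_lim (fun t => mvec n (X t) x i) p_infty (mvec n N x i).
Proof.
  intros HL Hi. apply is_lim_rsum. intros k Hk.
  exact (is_lim_scal_r _ (x k) _ _ (is_lim_entry n X N i k HL Hi Hk)).
Qed.

Lemma is_lim_eventually_const (f : R -> R) (c L : R) :
  (forall t, 0 <= t -> f t = c) -> is_lim f p_infty L -> L = c.
Proof.
  intros Hc Hf.
  assert (Hcst : is_lim (fun _ => c) p_infty L).
  { apply (is_lim_ext_loc f); [exists 0; intros t Ht; apply Hc; lra | exact Hf]. }
  apply is_lim_unique in Hcst. rewrite Lim_const in Hcst. now injection Hcst.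
Qed.

Lemma lim_zero_of_scaled (f : R -> R) (L M : R) :
  is_lim f p_infty L -> is_lim (fun t => t * f t) p_infty M -> L = 0.
Proof.
  intros Hf Hg. destruct (Req_dec L 0) as [|HL]; [assumption|exfalso].
  assert (Hinf := is_lim_mult (fun t => t) f p_infty p_infty L (is_lim_id _) Hf HL).
  apply is_lim_unique in Hinf, Hg. rewrite Hg in Hinf.
  unfold Rbar_mult, Rbar_mult' in Hinf.
  destruct (Rle_dec 0 L) as [H0|]; [destruct (Rle_lt_or_eq_dec 0 L H0)|]; congruence.
Qed.

Lemma limit_annihilates_l n S P X N :
  (forall t, 0 <= t -> forall i j, (i < n)%nat -> (j < n)%nat ->
     mmul n (madd S (mscale t P)) (X t) i j = idm i j) ->
  mlim_infty n X N -> forall i j, (i < n)%nat -> (j < n)%nat -> mmul n P N i j = 0.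
Proof.
  intros HI HL i j Hi Hj.
  apply (lim_zero_of_scaled (fun t => mmul n P (X t) i j) _ (idm i j - mmul n S N i j)).
  - apply is_lim_mmul_l; assumption.
  - apply (is_lim_ext_loc (fun t => idm i j - mmul n S (X t) i j)).
    + exists 0. intros t Ht. rewrite <- (HI t ltac:(lra) i j Hi Hj).
      rewrite mmul_madd_scale. ring.
    + apply is_lim_minus'; [apply is_lim_const | apply is_lim_mmul_l; assumption].
Qed.

Lemma limit_annihilates_r n S P X N :
  (forall t, 0 <= t -> forall i j, (i < n)%nat -> (j < n)%nat ->
     mmul n (X t) (madd S (mscale t P)) i j = idm i j) ->
  mlim_infty n X N -> forall i j, (i < n)%nat -> (j < n)%nat -> mmul n N P i j = 0.
Proof.
  intros HI HL i j Hi Hj. rewrite <- mmul_mtr.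
  apply (limit_annihilates_l n (mtr S) (mtr P) (fun t => mtr (X t))); auto.
  - intros t Ht i' j' Hi' Hj'. rewrite idm_sym, <- (HI t Ht j' i' Hj' Hi').
    exact (mmul_mtr n (madd S (mscale t P)) (X t) i' j').
  - intros i' j' Hi' Hj'. apply HL; assumption.
Qed.

(* With a left inverse, N S s = s for every s in ker P: indeed X(t) S s = X(t) A(t) s = s. *)
Lemma limit_fixes_kernel n S P X N s :
  (forall t, 0 <= t -> forall i j, (i < n)%nat -> (j < n)%nat ->
     mmul n (X t) (madd S (mscale t P)) i j = idm i j) ->
  mlim_infty n X N -> in_kernel n P s ->
  forall i, (i < n)%nat -> mvec n N (mvec n S s) i = s i.
Proof.
  intros HI HL Hs i Hi.
  apply (is_lim_eventually_const (fun t => mvec n (X t) (mvec n S s) i));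
    [|apply is_lim_mvec; assumption].
  intros t Ht.
  transitivity (mvec n (X t) (mvec n (madd S (mscale t P)) s) i).
  { apply rsum_ext; intros k Hk. rewrite mvec_madd_scale, Hs by assumption. ring. }
  rewrite mvec_assoc. unfold mvec at 1.
  rewrite (rsum_ext n _ (fun k => idm i k * s k)) by (intros k Hk; rewrite HI; auto).
  apply rsum_idm; assumption.
Qed.

Definition offdiag (P : mat) (i k : nat) : R := if Nat.eqb k i then 0 else P i k.

(* x is alternating on G: it changes sign along every edge (and vanishes at self-loops). *)
Definition alternating (n : nat) (P : mat) (x : nat -> R) : Prop :=
  forall u w, gedge n P u w -> x w = - x u.

Section SignlessLaplacian.

Variables (n : nat) (P : mat).
Hypothesis HP : signless_laplacian n P.

Lemma offdiag_01 i k : (i < n)%nat -> (k < n)%nat -> offdiag P i k = 0 \/ offdiag P i k = 1.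
Proof.
  intros Hi Hk. unfold offdiag. destruct (Nat.eqb_spec k i); [now left|].
  apply (HP i k Hi Hk). congruence.
Qed.

Lemma offdiag_sym i k : (i < n)%nat -> (k < n)%nat -> offdiag P i k = offdiag P k i.
Proof.
  intros Hi Hk. unfold offdiag.
  destruct (Nat.eqb_spec k i), (Nat.eqb_spec i k); try lia; [reflexivity|apply (HP i k Hi Hk)].
Qed.

Lemma Delta_offdiag i : (i < n)%nat -> Delta n P i = P i i - rsum n (offdiag P i).
Proof.
  intros Hi. unfold Delta. destruct (HP i i Hi Hi) as (_ & _ & Hii & _).
  rewrite Rabs_right by lra. f_equal. apply rsum_ext. intros k Hk.
  destruct (offdiag_01 i k Hi Hk) as [E|E]; revert E; unfold offdiag;
    destruct (Nat.eqb_spec k i); intros E; rewrite ?E; auto using Rabs_R0, Rabs_R1.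
Qed.

Lemma Delta_nonneg i : (i < n)%nat -> 0 <= Delta n P i.
Proof. intros Hi. destruct (HP i i Hi Hi) as (_ & _ & _ & [D|D]); lra. Qed.

Lemma mvec_split_diag x i : (i < n)%nat ->
  mvec n P x i = P i i * x i + rsum n (fun k => offdiag P i k * x k).
Proof.
  intros Hi. unfold mvec. rewrite (rsum_split_at n _ i Hi). f_equal.
  apply rsum_ext; intros k _. unfold offdiag. destruct Nat.eqb; ring.
Qed.

Lemma gedge_sym u w : gedge n P u w -> gedge n P w u.
Proof.
  intros (Hu & Hw & [[Hne He] | [-> HD]]); repeat split; auto.
  left. split; [congruence|]. rewrite <- He. apply (HP w u Hw Hu).
Qed.

(* The summand of x^T P x attached to the vertex i. *)
Definition vertex_energy (x : nat -> R) (i : nat) : R :=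
  Delta n P i * x i ^ 2 + / 2 * rsum n (fun k => offdiag P i k * (x i + x k) ^ 2).

Lemma edge_term_nonneg x i k : (i < n)%nat -> (k < n)%nat ->
  0 <= offdiag P i k * (x i + x k) ^ 2.
Proof.
  intros Hi Hk. pose proof (pow2_ge_0 (x i + x k)).
  destruct (offdiag_01 i k Hi Hk) as [-> | ->]; lra.
Qed.

Lemma vertex_energy_nonneg x i : (i < n)%nat -> 0 <= vertex_energy x i.
Proof.
  intros Hi. unfold vertex_energy.
  assert (0 <= rsum n (fun k => offdiag P i k * (x i + x k) ^ 2))
    by (apply rsum_nonneg; intros k Hk; apply edge_term_nonneg; assumption).
  pose proof (Delta_nonneg i Hi). pose proof (pow2_ge_0 (x i)).
  assert (0 <= Delta n P i * x i ^ 2) by (apply Rmult_le_pos; assumption).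
  lra.
Qed.

Lemma vertex_energy_expand x i : (i < n)%nat ->
  vertex_energy x i = x i * mvec n P x i
    + / 2 * (rsum n (fun k => offdiag P i k * x k ^ 2) - rsum n (fun k => offdiag P i k * x i ^ 2)).
Proof.
  intros Hi. unfold vertex_energy. rewrite Delta_offdiag, mvec_split_diag by assumption.
  assert (Hsq : rsum n (fun k => offdiag P i k * (x i + x k) ^ 2)
     = rsum n (fun k => offdiag P i k * x i ^ 2)
       + 2 * x i * rsum n (fun k => offdiag P i k * x k) + rsum n (fun k => offdiag P i k * x k ^ 2)).
  { rewrite <- rsum_scal, <- !rsum_plus. apply rsum_ext; intros; cbv beta; ring. }
  assert (Hdiag : rsum n (fun k => offdiag P i k * x i ^ 2) = x i ^ 2 * rsum n (offdiag P i)).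
  { rewrite <- rsum_scal. apply rsum_ext; intros; ring. }
  rewrite Hsq, Hdiag. field.
Qed.

(* x^T P x = sum_i vertex_energy x i: the correction terms of [vertex_energy_expand]
   cancel in the double sum by symmetry of P. *)
Lemma quadratic_form_energy x :
  rsum n (fun i => x i * mvec n P x i) = rsum n (vertex_energy x).
Proof.
  assert (Hsw : rsum n (fun i => rsum n (fun k => offdiag P i k * x k ^ 2))
              = rsum n (fun i => rsum n (fun k => offdiag P i k * x i ^ 2))).
  { rewrite rsum_swap. apply rsum_ext; intros k Hk. apply rsum_ext; intros i Hi.
    rewrite offdiag_sym; auto. }
  rewrite (rsum_ext n (vertex_energy x) (fun i => x i * mvec n P x i
      + / 2 * rsum n (fun k => offdiag P i k * x k ^ 2)
      + (- / 2) * rsum n (fun k => offdiag P i k * x i ^ 2)))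
    by (intros; rewrite vertex_energy_expand by assumption; ring).
  rewrite !rsum_plus, !rsum_scal, Hsw. ring.
Qed.

(* A vector in ker P is alternating: x^T P x = 0 forces every vertex energy to vanish. *)
Lemma kernel_alternating x : in_kernel n P x -> alternating n P x.
Proof.
  intros Hx.
  assert (Hzero : forall i, (i < n)%nat -> vertex_energy x i = 0).
  { apply rsum_nonneg_eq0; [apply vertex_energy_nonneg|].
    rewrite <- quadratic_form_energy. apply rsum_zero. intros i Hi. rewrite Hx; auto; ring. }
  intros u w (Hu & Hw & Hedge). specialize (Hzero u Hu). unfold vertex_energy in Hzero.
  pose proof (Delta_nonneg u Hu). pose proof (pow2_ge_0 (x u)).
  assert (Hloop : 0 <= Delta n P u * x u ^ 2) by (apply Rmult_le_pos; assumption).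
  assert (Hedges : 0 <= rsum n (fun k => offdiag P u k * (x u + x k) ^ 2))
    by (apply rsum_nonneg; intros k Hk; apply edge_term_nonneg; assumption).
  destruct Hedge as [[Hne He] | [-> HD]].
  - assert (Hterm : offdiag P u w * (x u + x w) ^ 2 = 0).
    { apply (rsum_nonneg_eq0 n (fun k => offdiag P u k * (x u + x k) ^ 2));
        [intros; apply edge_term_nonneg | lra |]; assumption. }
    unfold offdiag in Hterm. destruct (Nat.eqb_spec w u); [lia|].
    rewrite He in Hterm. nra.
  - rewrite HD in Hloop, Hzero. nra.
Qed.

(* Conversely every alternating vector lies in ker P: (Px)_i = Delta_i x_i, and x_i = 0
   whenever Delta_i = 2 (a self-loop). *)
Lemma alternating_kernel x : alternating n P x -> in_kernel n P x.
Proof.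
  intros Hx i Hi.
  rewrite mvec_split_diag by assumption.
  rewrite (rsum_ext n _ (fun k => - x i * offdiag P i k)).
  - rewrite rsum_scal.
    replace (P i i * x i + - x i * rsum n (offdiag P i)) with (Delta n P i * x i)
      by (rewrite Delta_offdiag; auto; ring).
    destruct (HP i i Hi Hi) as (_ & _ & _ & [-> | HD]); [ring|].
    assert (x i = - x i) by (apply Hx; repeat split; auto). nra.
  - intros k Hk. destruct (offdiag_01 i k Hi Hk) as [E|E]; rewrite E; [ring|].
    unfold offdiag in E. destruct (Nat.eqb_spec k i); [lra|].
    rewrite (Hx i k) by (repeat split; auto). ring.
Qed.

End SignlessLaplacian.

Lemma gconn_lt n P a w : gconn n P a w -> (w < n)%nat.
Proof. induction 1 as [|v w _ _ (_ & Hw & _)]; auto. Qed.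

Lemma gconn_src n P a w : gconn n P a w -> (a < n)%nat.
Proof. induction 1; auto. Qed.

Lemma alternating_abs n P x a w : alternating n P x -> gconn n P a w -> Rabs (x w) = Rabs (x a).
Proof. intros Hx H. induction H as [|v w _ IH He]; auto. rewrite (Hx v w He), Rabs_Ropp; auto. Qed.

Lemma alternating_sign n P x a col w : alternating n P x -> bipartition n P a col ->
  gconn n P a w -> x w = sgn (col w) * sgn (col a) * x a.
Proof.
  intros Hx Hb H. induction H as [Ha| v w Hv IH He].
  - unfold sgn; destruct (col a); ring.
  - rewrite (Hx v w He), IH.
    assert (col v <> col w) by (apply Hb; auto; eapply gconn_step; eauto).
    destruct (col v), (col w); try congruence; unfold sgn; ring.
Qed.

(* An alternating vector vanishes on a non-bipartite component: otherwise its sign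
   would be a proper 2-colouring of that component. *)
Lemma alternating_nonbipartite n P x a u : alternating n P x ->
  ~ comp_bipartite n P a -> gconn n P a u -> x u = 0.
Proof.
  intros Hx Hnb Hu. destruct (Req_dec (x u) 0) as [|Hnz]; auto. exfalso. apply Hnb.
  exists (fun w => if Rlt_dec 0 (x w) then true else false).
  intros u1 u2 H1 _ He.
  pose proof (alternating_abs n P x a u1 Hx H1). pose proof (alternating_abs n P x a u Hx Hu).
  assert (Rabs (x u) > 0) by (apply Rabs_pos_lt; auto).
  assert (x u1 <> 0) by (intro E; rewrite E, Rabs_R0 in *; lra).
  rewrite (Hx u1 u2 He).
  destruct (Rlt_dec 0 (x u1)), (Rlt_dec 0 (- x u1)); intro Hc; first [discriminate | lra].
Qed.

Definition component_sign (n : nat) (P : mat) (a : nat) (col : nat -> bool) (w : nat) : R :=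
  if excluded_middle_informative (gconn n P a w) then sgn (col w) else 0.

Lemma component_sign_alternating n P a col : signless_laplacian n P ->
  bipartition n P a col -> alternating n P (component_sign n P a col).
Proof.
  intros HP Hb u w He. unfold component_sign.
  destruct (excluded_middle_informative (gconn n P a u)) as [Gu|Gu].
  - assert (Gw : gconn n P a w) by (eapply gconn_step; eauto).
    destruct (excluded_middle_informative (gconn n P a w)); [|contradiction].
    pose proof (Hb u w Gu Gw He).
    destruct (col u), (col w); try congruence; unfold sgn; ring.
  - destruct (excluded_middle_informative (gconn n P a w)) as [Gw|]; [|ring].
    exfalso. apply Gu. eapply gconn_step; [exact Gw | apply gedge_sym; assumption].
Qed.

(* For the inverses X(t) of S + tP and their limit N: every column and every row of N
   lies in ker P (PN = 0 and NP = 0, with P symmetric), hence is alternating. *)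
Lemma limit_lines_alternating n S P X N : signless_laplacian n P ->
  (forall t, 0 <= t -> is_inverse n (madd S (mscale t P)) (X t)) -> mlim_infty n X N ->
  (forall v, (v < n)%nat -> alternating n P (fun k => N k v)) /\
  (forall u, (u < n)%nat -> alternating n P (fun k => N u k)).
Proof.
  intros HP HI HL. split.
  - intros v Hv. apply kernel_alternating; auto. intros i Hi.
    apply (limit_annihilates_l n S P X N); auto. intros; apply HI; auto.
  - intros u Hu. apply kernel_alternating; auto. intros i Hi.
    rewrite <- (limit_annihilates_r n S P X N) with (i := u) (j := i); auto;
      [|intros; apply HI; auto].
    apply rsum_ext. intros k Hk. rewrite (proj1 (HP i k Hi Hk)). ring.
Qed.

(* A bipartite component forces N <> 0, since N S s = s for its signed indicator s. *)
Lemma limit_nonzero_of_bipartite n S P X N a col : signless_laplacian n P ->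
  (forall t, 0 <= t -> is_inverse n (madd S (mscale t P)) (X t)) -> mlim_infty n X N ->
  (a < n)%nat -> bipartition n P a col ->
  ~ (forall u v, (u < n)%nat -> (v < n)%nat -> N u v = 0).
Proof.
  intros HP HI HL Ha Hb Hz.
  set (s := component_sign n P a col).
  assert (Hs : mvec n N (mvec n S s) a = s a).
  { apply (limit_fixes_kernel n S P X N); auto; [intros; apply HI; auto|].
    apply alternating_kernel, component_sign_alternating; assumption. }
  unfold mvec at 1 in Hs. rewrite rsum_zero in Hs by (intros j Hj; rewrite Hz by assumption; ring).
  revert Hs. unfold s, component_sign.
  destruct (excluded_middle_informative (gconn n P a a)) as [_|G].
  - unfold sgn; destruct (col a); lra.
  - exfalso; apply G, gconn_refl, Ha.
Qed.

Theorem corollary4p4 (n : nat) (l alpha : R) (P : mat) (X : R -> mat) (N : mat) :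
  (3 <= n)%nat -> 0 < l -> INR (n - 2) * l <= alpha ->
  signless_laplacian n P ->
  (forall t, 0 <= t -> is_inverse n (madd (Smat alpha l) (mscale t P)) (X t)) ->
  mlim_infty n X N ->
  (forall a b u v u' v', gconn n P a u -> gconn n P a u' ->
      gconn n P b v -> gconn n P b v' -> Rabs (N u v) = Rabs (N u' v')) /\
  (forall a, (a < n)%nat -> ~ comp_bipartite n P a ->
      forall u v, gconn n P a u -> (v < n)%nat -> N u v = 0 /\ N v u = 0) /\
  ((forall u v, (u < n)%nat -> (v < n)%nat -> N u v = 0) <->
      (forall a, (a < n)%nat -> ~ comp_bipartite n P a)) /\
  (forall a b cola colb, (a < n)%nat -> (b < n)%nat ->
      bipartition n P a cola -> bipartition n P b colb ->
      exists c : R, forall u v, gconn n P a u -> gconn n P b v ->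
        N u v = c * sgn (cola u) * sgn (colb v)).
Proof.
  (* the bounds on n, l and alpha only serve to make S + tP invertible, which is assumed *)
  intros _ _ _ HP HI HL.
  destruct (limit_lines_alternating n _ P X N HP HI HL) as [Hcol Hrow].
  split; [|split; [|split]].
  - intros a b u v u' v' Hu Hu' Hv Hv'.
    pose proof (gconn_src _ _ _ _ Hu) as Ha.
    rewrite (alternating_abs n P _ a u (Hcol v (gconn_lt _ _ _ _ Hv)) Hu),
            (alternating_abs n P _ a u' (Hcol v' (gconn_lt _ _ _ _ Hv')) Hu'),
            (alternating_abs n P _ b v (Hrow a Ha) Hv),
            (alternating_abs n P _ b v' (Hrow a Ha) Hv').
    reflexivity.
  - intros a _ Hnb u v Hu Hv. split.
    + exact (alternating_nonbipartite n P _ a u (Hcol v Hv) Hnb Hu).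
    + exact (alternating_nonbipartite n P _ a u (Hrow v Hv) Hnb Hu).
  - split.
    + intros Hz a Ha [col Hb]. exact (limit_nonzero_of_bipartite n _ P X N a col HP HI HL Ha Hb Hz).
    + intros Hnb u v Hu Hv.
      exact (alternating_nonbipartite n P _ u u (Hcol v Hv) (Hnb u Hu) (gconn_refl n P u Hu)).
  - intros a b cola colb Ha Hb HA HB. exists (sgn (cola a) * sgn (colb b) * N a b).
    intros u v Hu Hv.
    rewrite (alternating_sign n P _ a cola u (Hcol v (gconn_lt _ _ _ _ Hv)) HA Hu),
            (alternating_sign n P _ b colb v (Hrow a Ha) HB Hv).
    ring.
Qed.
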